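(* Let $0 \leq r < 1$. Define $\delta_k \in \{0,1\}$ for $k \geq 1$ inductively by $\delta_k = 1$ if $\frac{\sum_{i=1}^{k-1} 2i\delta_i + 2k}{k(k+1)} \leq r$, and $\delta_k = 0$ otherwise. For $k \geq 1$ let $w^{\langle k \rangle}$ be the word consisting of $2k$ copies of the letter $1 - \delta_k$, and let $w = w^{\langle 1 \rangle} w^{\langle 2 \rangle} w^{\langle 3 \rangle} \cdots$ (infinite concatenation). Then $\lim_{n \to \infty} |P(w^{(n)})|/n = r$.
   Context: $w^{(n)}$ denotes the initial subword of length $n$ of $w$. For a binary word $u = u_1 \cdots u_\ell$ of length $\ell$, $P(u)$ is the set of indices $i \geq 2$ such that at least one of the following holds: (i) $\ell \geq i$ and $u_{i-1} u_i = 00$; (ii) $\ell \geq i+2$ and $u_{i-1} u_i u_{i+1} u_{i+2} = 0100$; (iii) $\ell \geq i+3$ and $u_{i-1} \cdots u_{i+3} = 01010$. *)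

From Stdlib Require Import Reals Arith List.
Import ListNotations.
Open Scope R_scope.

(* The test defining delta_k, given s = sum_{i=1}^{k-1} 2 i delta_i :
   delta_k = 1  iff  (s + 2k) / (k(k+1)) <= r. *)
Definition dtest (r : R) (k s : nat) : bool :=
  if Rle_dec (INR (s + 2 * k) / INR (k * (k + 1))) r then true else false.

Fixpoint dsum (r : R) (k : nat) : nat :=
  match k with
  | O => O
  | S k' => (dsum r k' + (if dtest r (S k') (dsum r k') then 2 * S k' else 0))%nat
  end.

Definition delta (r : R) (k : nat) : nat :=
  if dtest r k (dsum r (k - 1)) then 1%nat else 0%nat.

Definition wblock (r : R) (k : nat) : list nat := repeat (1 - delta r k)%nat (2 * k).

Fixpoint wlist (r : R) (K : nat) : list nat :=
  match K with
  | O => []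
  | S K' => wlist r K' ++ wblock r (S K')
  end.

(* The infinite word w, 0-indexed letters: w r m is the (m+1)-th letter.
   wlist r (S m) has length (m+1)(m+2) > m, so this is the letter of the
   infinite concatenation. *)
Definition w (r : R) (m : nat) : nat := nth m (wlist r (S m)) 0%nat.

Definition prefix (r : R) (n : nat) : list nat := map (w r) (seq 0 n).

Definition letter (u : list nat) (i : nat) : nat := nth (i - 1) u 0%nat.

Definition inP (u : list nat) (i : nat) : bool :=
  let l := length u in
  (2 <=? i)%nat && (
     ((i <=? l)%nat && (letter u (i-1) =? 0)%nat && (letter u i =? 0)%nat)
  ||  ((i + 2 <=? l)%nat && (letter u (i-1) =? 0)%nat && (letter u i =? 1)%nat
        && (letter u (i+1) =? 0)%nat && (letter u (i+2) =? 0)%nat)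
  ||  ((i + 3 <=? l)%nat && (letter u (i-1) =? 0)%nat && (letter u i =? 1)%nat
        && (letter u (i+1) =? 0)%nat && (letter u (i+2) =? 1)%nat
        && (letter u (i+3) =? 0)%nat)).

(* P(u) as the list of its elements, i ranging over 2..length u
   (every condition forces i <= length u) *)
Definition Pset (u : list nat) : list nat :=
  filter (inP u) (seq 2 (length u - 1)).

From Stdlib Require Import Reals List Lia Lra.
Open Scope R_scope.

(* Blocks of w are constant of length at least 2, so no factor 010 occurs and
   P(w^(n)) consists exactly of the ends of 00 pairs.  Up to K boundary
   effects, the number of such pairs in the first K blocks is
   sum_{i<=K} 2 i delta_i, and the greedy definition of delta keeps this sum
   within 2K of r K (K + 1).  The error is therefore O(K) = O(sqrt n). *)

Lemma block_index_exists (m : nat) : exists K, (K * (K + 1) <= m < (K + 1) * (K + 2))%nat.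
Proof.
  induction m as [|m [K HK]]; [exists 0%nat; lia|].
  destruct (Nat.eq_dec (S m) ((K + 1) * (K + 2))).
  - exists (K + 1)%nat; nia.
  - exists K; nia.
Qed.

Lemma INR_block_start (K : nat) : INR (K * (K + 1)) = INR K * (INR K + 1).
Proof. rewrite mult_INR, plus_INR; simpl; ring. Qed.

Lemma Un_cv_ratio_of_block_error (a : nat -> R) (r c : R) :
  (forall K n, (K * (K + 1) <= n < (K + 1) * (K + 2))%nat ->
     Rabs (a n - r * INR n) <= c * INR (S K)) ->
  Un_cv (fun n => a n / INR n) r.
Proof.
  intros Herr eps Heps.
  assert (Hc : 0 <= c).
  { specialize (Herr 0%nat 0%nat ltac:(lia)); simpl in Herr.
    pose proof (Rabs_pos (a 0%nat - r * 0)); lra. }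
  destruct (archimed_cor1 (eps / (c + 1))) as [K0 [HK0 HK0pos]].
  { apply Rdiv_lt_0_compat; lra. }
  exists (K0 * (K0 + 1))%nat; intros n Hn.
  destruct (block_index_exists n) as [K HK].
  assert (HK0K : (K0 <= K)%nat) by nia.
  assert (HK0r : 0 < INR K0) by (apply lt_0_INR; lia).
  assert (HKr : INR K0 <= INR K) by (apply le_INR; lia).
  assert (Hn_lb : INR K * (INR K + 1) <= INR n)
    by (rewrite <- INR_block_start; apply le_INR; lia).
  assert (Hsmall : c < eps * INR K0).
  { apply (Rmult_lt_compat_r (INR K0)) in HK0; [|lra].
    rewrite Rinv_l in HK0 by lra.
    replace eps with (eps / (c + 1) * (c + 1)) by (field; lra).
    nra. }
  pose proof (Herr K n HK) as Hb; rewrite S_INR in Hb.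
  unfold R_dist.
  replace (a n / INR n - r) with ((a n - r * INR n) / INR n) by (field; nra).
  unfold Rdiv; rewrite Rabs_mult, Rabs_inv, (Rabs_right (INR n)) by nra.
  apply (Rmult_lt_reg_r (INR n)); [nra|].
  rewrite Rmult_assoc, Rinv_l, Rmult_1_r by nra.
  assert (c * (INR K + 1) < eps * INR K0 * (INR K + 1))
    by (apply Rmult_lt_compat_r; lra).
  assert (eps * INR K0 * (INR K + 1) <= eps * INR K * (INR K + 1))
    by (apply Rmult_le_compat_r; [lra|]; apply Rmult_le_compat_l; lra).
  assert (eps * (INR K * (INR K + 1)) <= eps * INR n) by (apply Rmult_le_compat_l; lra).
  lra.
Qed.

Section Word.
Variable r : R.
Local Open Scope nat_scope.

Lemma length_wlist K : length (wlist r K) = K * (K + 1).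
Proof.
  induction K as [|K IH]; [reflexivity|].
  simpl; rewrite length_app, IH; unfold wblock; rewrite repeat_length; nia.
Qed.

Lemma nth_wlist_le K K' m :
  K <= K' -> m < length (wlist r K) -> nth m (wlist r K') 0 = nth m (wlist r K) 0.
Proof.
  intros HK Hm; induction HK as [|K' HK IH]; [reflexivity|].
  simpl; rewrite app_nth1; [assumption|].
  rewrite length_wlist in *; nia.
Qed.

Lemma w_block K m : K * (K + 1) <= m < (K + 1) * (K + 2) -> w r m = 1 - delta r (S K).
Proof.
  intros Hm; unfold w.
  rewrite (nth_wlist_le (S K) (S m)) by (rewrite ?length_wlist; nia).
  simpl wlist; rewrite app_nth2; rewrite length_wlist; [|lia].
  unfold wblock; apply repeat_spec with (n := 2 * S K), nth_In.
  rewrite repeat_length; nia.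
Qed.

(* Every block has length at least 2. *)
Lemma w_change_then_repeat m : w r m <> w r (S m) -> w r (S (S m)) = w r (S m).
Proof.
  intros Hchange; destruct (block_index_exists (S m)) as [K HK].
  destruct (Nat.eq_dec (S m) (K * (K + 1))) as [Hstart|Hinner].
  - rewrite !(w_block K) by nia; reflexivity.
  - exfalso; apply Hchange; rewrite !(w_block K) by lia; reflexivity.
Qed.

Lemma length_prefix n : length (prefix r n) = n.
Proof. unfold prefix; rewrite length_map, length_seq; reflexivity. Qed.

Lemma letter_prefix n j : 1 <= j <= n -> letter (prefix r n) j = w r (j - 1).
Proof.
  intros Hj; unfold letter, prefix.
  rewrite nth_indep with (d' := w r 0) by (rewrite length_map, length_seq; lia).
  rewrite map_nth, seq_nth by lia; reflexivity.
Qed.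

Definition zero_pair (i : nat) : bool := (w r (i - 2) =? 0) && (w r (i - 1) =? 0).

Definition zero_pairs (n : nat) : nat := length (filter zero_pair (seq 2 (n - 1))).

(* Conditions (ii) and (iii) of [P] would need a factor 010 of [w]. *)
Lemma inP_prefix n i : 2 <= i <= n -> inP (prefix r n) i = zero_pair i.
Proof.
  intros Hi; unfold inP, zero_pair; rewrite length_prefix.
  rewrite !(letter_prefix n (i - 1)), !(letter_prefix n i) by lia.
  replace (i - 1 - 1) with (i - 2) by lia; replace (i - 1) with (S (i - 2)) by lia.
  assert (Hno010 : i + 2 <= n ->
            w r (i - 2) = 0 -> w r (S (i - 2)) = 1 -> letter (prefix r n) (i + 1) = 0 -> False).
  { intros Hn H0 H1 H2; rewrite letter_prefix in H2 by lia.
    replace (i + 1 - 1) with (S (S (i - 2))) in H2 by lia.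
    rewrite w_change_then_repeat in H2; lia. }
  apply Bool.eq_iff_eq_true;
    repeat rewrite ?Bool.andb_true_iff, ?Bool.orb_true_iff, ?Nat.eqb_eq, ?Nat.leb_le.
  split.
  - intros [_ [[[[_ H0] H1] | [[[[H2 H0] H1] H3] _]] | [[[[[H3 H0] H1] H4] _] _]]].
    + split; assumption.
    + exfalso; apply Hno010; assumption.
    + exfalso; apply Hno010; [lia | assumption ..].
  - intros [H0 H1]; split; [lia|]; left; left; repeat split; assumption || lia.
Qed.

Lemma length_Pset_prefix n : length (Pset (prefix r n)) = zero_pairs n.
Proof.
  unfold Pset, zero_pairs; rewrite length_prefix; f_equal.
  apply filter_ext_in; intros i Hi; apply in_seq in Hi.
  apply inP_prefix; lia.
Qed.

Lemma zero_pairs_S n :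
  zero_pairs (S n) = zero_pairs n + (if ((1 <=? n) && zero_pair (S n))%bool then 1 else 0).
Proof.
  destruct n as [|n]; [reflexivity|].
  unfold zero_pairs; replace (S (S n) - 1) with (S n) by lia; replace (S n - 1) with n by lia.
  rewrite seq_S, filter_app, length_app; cbn -[zero_pair].
  replace (S (S n)) with (2 + n) by lia.
  destruct (zero_pair (2 + n)); simpl; lia.
Qed.

Lemma zero_pairs_mono n m : n <= m -> zero_pairs n <= zero_pairs m.
Proof. intros Hnm; induction Hnm; [lia|]; rewrite zero_pairs_S; lia. Qed.

Lemma delta_0_or_1 k : delta r k = 0 \/ delta r k = 1.
Proof. unfold delta; destruct dtest; auto. Qed.

Lemma dsum_S k : dsum r (S k) = dsum r k + 2 * S k * delta r (S k).
Proof.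
  simpl dsum; unfold delta; replace (S k - 1) with k by lia.
  destruct dtest; lia.
Qed.

(* Only the first letter of a block can fail to complete a 00 pair. *)
Lemma zero_pairs_in_block K j : j <= 2 * (K + 1) ->
  zero_pairs (K * (K + 1)) + delta r (S K) * (j - 1) <= zero_pairs (K * (K + 1) + j)
  <= zero_pairs (K * (K + 1)) + delta r (S K) * j.
Proof.
  induction j as [|j IH]; intros Hj; [rewrite Nat.add_0_r; lia|].
  specialize (IH ltac:(lia)).
  replace (K * (K + 1) + S j) with (S (K * (K + 1) + j)) by lia.
  rewrite zero_pairs_S; unfold zero_pair.
  replace (S (K * (K + 1) + j) - 1) with (K * (K + 1) + j) by lia.
  rewrite (w_block K (K * (K + 1) + j)) by nia.
  destruct j as [|j].
  - destruct (delta_0_or_1 (S K)) as [D|D]; rewrite D in *; simpl;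
      rewrite ?Bool.andb_false_r; [lia|destruct (_ && _)%bool; lia].
  - replace (S (K * (K + 1) + S j) - 2) with (K * (K + 1) + j) by lia.
    rewrite (w_block K (K * (K + 1) + j)), (proj2 (Nat.leb_le 1 (K * (K + 1) + S j))) by nia.
    destruct (delta_0_or_1 (S K)) as [D|D]; rewrite D in *; simpl; lia.
Qed.

Lemma zero_pairs_le_dsum K :
  zero_pairs (K * (K + 1)) <= dsum r K <= zero_pairs (K * (K + 1)) + K.
Proof.
  induction K as [|K IH]; [cbn; lia|].
  pose proof (zero_pairs_in_block K (2 * (K + 1)) (le_n _)) as H.
  replace (K * (K + 1) + 2 * (K + 1)) with (S K * (S K + 1)) in H by nia.
  rewrite dsum_S; destruct (delta_0_or_1 (S K)) as [D|D]; rewrite D in *; lia.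
Qed.
End Word.

Lemma dtest_true_iff r k s : (0 < k)%nat ->
  dtest r k s = true <-> INR s + 2 * INR k <= r * (INR k * (INR k + 1)).
Proof.
  intros Hk; unfold dtest.
  assert (Hpos : 0 < INR k * (INR k + 1)) by (apply lt_0_INR in Hk; nra).
  rewrite INR_block_start, plus_INR, mult_INR; simpl (INR 2).
  destruct Rle_dec as [Hle|Hgt]; split; intros H; try discriminate; auto.
  - apply (Rmult_le_compat_r (INR k * (INR k + 1))) in Hle; [|lra].
    unfold Rdiv in Hle; rewrite Rmult_assoc, Rinv_l, Rmult_1_r in Hle by lra; exact Hle.
  - exfalso; apply Hgt.
    apply (Rmult_le_reg_r (INR k * (INR k + 1))); [lra|].
    unfold Rdiv; rewrite Rmult_assoc, Rinv_l, Rmult_1_r by lra; exact H.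
Qed.

Lemma dsum_near r (hr0 : 0 <= r) (hr1 : r < 1) K :
  r * (INR K * (INR K + 1)) - 2 * INR K <= INR (dsum r K) <= r * (INR K * (INR K + 1)).
Proof.
  induction K as [|K [IHlo IHhi]]; [simpl; lra|].
  assert (HK : 0 <= INR K) by apply pos_INR.
  change (dsum r (S K))
    with (dsum r K + (if dtest r (S K) (dsum r K) then 2 * S K else 0))%nat.
  assert (E2 : INR (2 * S K) = 2 * (INR K + 1)) by (rewrite mult_INR, (S_INR K); simpl (INR 2); ring).
  rewrite S_INR.
  destruct (dtest r (S K) (dsum r K)) eqn:T.
  - apply dtest_true_iff in T; [|lia]; rewrite S_INR in T.
    rewrite plus_INR, E2.
    split; nra.
  - assert (T' : ~ INR (dsum r K) + 2 * INR (S K) <= r * (INR (S K) * (INR (S K) + 1)))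
      by (rewrite <- dtest_true_iff, T; [discriminate | lia]).
    rewrite S_INR in T'; rewrite Nat.add_0_r.
    split; nra.
Qed.

Lemma zero_pairs_near r (hr0 : 0 <= r) (hr1 : r < 1) K n :
  (K * (K + 1) <= n < (K + 1) * (K + 2))%nat ->
  Rabs (INR (zero_pairs r n) - r * INR n) <= 5 * INR (S K).
Proof.
  intros Hn.
  assert (HK : 0 <= INR K) by apply pos_INR.
  pose proof (zero_pairs_mono r _ _ (proj1 Hn)) as Hmono_lo.
  assert (Hmono_hi : (zero_pairs r n <= zero_pairs r (S K * (S K + 1)))%nat)
    by (apply zero_pairs_mono; nia).
  pose proof (zero_pairs_le_dsum r K) as HdK.
  pose proof (zero_pairs_le_dsum r (S K)) as HdSK.
  destruct (dsum_near r hr0 hr1 K) as [Hlo _].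
  destruct (dsum_near r hr0 hr1 (S K)) as [_ Hhi].
  rewrite S_INR in *.
  assert (Zhi : INR (zero_pairs r n) <= r * ((INR K + 1) * (INR K + 1 + 1)))
    by (apply Rle_trans with (INR (dsum r (S K))); [apply le_INR; lia | exact Hhi]).
  assert (Zlo : INR (dsum r K) <= INR (zero_pairs r n) + INR K)
    by (rewrite <- plus_INR; apply le_INR; lia).
  assert (Nlo : INR K * (INR K + 1) <= INR n)
    by (rewrite <- INR_block_start; apply le_INR; lia).
  assert (Nhi : INR n <= (INR K + 1) * (INR K + 2)).
  { replace ((INR K + 1) * (INR K + 2)) with (INR ((K + 1) * (K + 2)))
      by (rewrite mult_INR, !plus_INR; simpl; ring).
    apply le_INR; lia. }
  assert (0 <= r * (INR n - INR K * (INR K + 1))) by (apply Rmult_le_pos; lra).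
  assert (0 <= r * ((INR K + 1) * (INR K + 2) - INR n)) by (apply Rmult_le_pos; lra).
  apply Rabs_le; split; nra.
Qed.

Theorem lemma4p17 (r : R) (hr0 : 0 <= r) (hr1 : r < 1) :
  Un_cv (fun n : nat => INR (length (Pset (prefix r n))) / INR n) r.
Proof.
  apply (Un_cv_ratio_of_block_error (fun n => INR (length (Pset (prefix r n)))) r 5).
  intros K n Hn; rewrite length_Pset_prefix.
  exact (zero_pairs_near r hr0 hr1 K n Hn).
Qed.
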